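(* Let $l,u,\hbar$ satisfy the standing assumptions below, let $\overline{Y}\in C^1_G(0,T)$ with $l_T\le\hat{\mathbb{E}}[\hbar(T,\overline{Y}_T)]\le u_T$, and let $(Y,R)\in C^1_G(0,T)\times C^T_B$ be the solution of the backward Skorokhod problem with sublinear expectation associated to $\overline{Y},\hbar$ and barriers $l,u$. Then for every $t\in[0,T]$, $$|R_T-R_t|\le\mathscr{C}\sup_{s\in[t,T]}\hat{\mathbb{E}}[|\overline{Y}_s|]+C_0(t,T),$$ where $\mathscr{C}:=1+\frac{2\overline{c}}{\underline{c}}$ and $C_0(t,T):=\sup_{s\in[t,T]}\max[|L_s(0)|,|U_s(0)|]$.
   Context: Setting: $\hat{\mathbb{E}}$ is the $G$-expectation on $\Omega_T=\{\omega\in C([0,T];\mathbb{R}^d):\omega_0=0\}$; $L^1_G(\Omega_t)$ the completion of bounded Lipschitz cylinder functionals of the canonical process up to $t$ under $\hat{\mathbb{E}}|\cdot|$; $C^1_G(0,T)$ the processes $Y$ with $Y_v\in L^1_G(\Omega_v)$ and $v\mapsto Y_v$ continuous in $\hat{\mathbb{E}}|\cdot|$; $C^T_B$ the deterministic continuous functions on $[0,T]$ of bounded variation starting at $0$. Standing assumptions: $l,u$ bounded continuous with $\inf_t(u_t-l_t)>0$; $\hbar:[0,T]\times\Omega_T\times\mathbb{R}\to\mathbb{R}$ with $(t,y)\mapsto\hbar(t,y)$ uniformly continuous uniformly in $\omega$, strictly increasing in $y$, $\hbar(t,y)\in L^1_G(\Omega_T)$, $\hat{\mathbb{E}}[\lim_{y\downarrow-\infty}\hbar(t,y)]<\inf_sl_s<\sup_su_s<\hat{\mathbb{E}}[\lim_{y\uparrow\infty}\hbar(t,y)]$,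 $|\hbar(t,y)|\le C_\hbar(1+|y|)$, $\underline{c}|y-y'|\le|\hbar(t,y)-\hbar(t,y')|\le\overline{c}|y-y'|$ ($0<\underline{c}\le\overline{c}$). For $X\in L^1_G(\Omega_s)$: $\overline{H}(s,x,X)=\hat{\mathbb{E}}[\hbar(s,x+X-\hat{\mathbb{E}}[X])]$, $L_s(X)=\overline{H}^{-1}(s,\cdot,X)(l_s)$, $U_s(X)=\overline{H}^{-1}(s,\cdot,X)(u_s)$. $(Y,R)$ solves the backward Skorokhod problem with sublinear expectation associated to $\overline{Y},\hbar,l,u$ if $Y_t=\overline{Y}_t+R_T-R_t$, $l_t\le\hat{\mathbb{E}}[\hbar(t,Y_t)]\le u_t$ for all $t$, and $\int_s^t(\hat{\mathbb{E}}[\hbar(v,Y_v)]-l_v)dR_v\le0$, $\int_s^t(\hat{\mathbb{E}}[\hbar(v,Y_v)]-u_v)dR_v\le0$ for $0\le s\le t\le T$. *)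

From Stdlib Require Import Reals ClassicalEpsilon.
From Coquelicot Require Import Coquelicot.
Open Scope R_scope.

Fixpoint rsum (f : nat -> R) (n : nat) : R :=
  match n with O => 0 | S k => rsum f k + f k end.

Definition tagged_partition (a b : R) (n : nat) (x xi : nat -> R) : Prop :=
  x O = a /\ x n = b /\
  (forall i, (i < n)%nat -> x i < x (S i) /\ x i <= xi i <= x (S i)).

Definition is_RS_integral (f g : R -> R) (a b I : R) : Prop :=
  forall eps, 0 < eps -> exists delta, 0 < delta /\
    forall n x xi, tagged_partition a b n x xi ->
      (forall i, (i < n)%nat -> x (S i) - x i < delta) ->
      Rabs (rsum (fun i => f (xi i) * (g (x (S i)) - g (x i))) n - I) < eps.

(* H : the space of random variables (plays the role of L^1_G(Omega_T)),
   E : the sublinear expectation on it (plays the role of the G-expectation). *)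
Definition sublinear_expectation {Omega : Type}
  (H : (Omega -> R) -> Prop) (E : (Omega -> R) -> R) : Prop :=
  (forall c : R, H (fun _ => c)) /\
  (forall X Y, H X -> H Y -> H (fun w => X w + Y w)) /\
  (forall (a : R) X, H X -> H (fun w => a * X w)) /\
  (forall X, H X -> H (fun w => Rabs (X w))) /\
  (forall X Y, H X -> H Y -> (forall w, X w <= Y w) -> E X <= E Y) /\
  (forall c : R, E (fun _ => c) = c) /\
  (forall X Y, H X -> H Y -> E (fun w => X w + Y w) <= E X + E Y) /\
  (forall (a : R) X, 0 <= a -> H X -> E (fun w => a * X w) = a * E X).

Definition C1G {Omega : Type} (H : (Omega -> R) -> Prop) (E : (Omega -> R) -> R)
  (T : R) (Y : R -> Omega -> R) : Prop :=
  (forall v, 0 <= v <= T -> H (Y v)) /\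
  (forall v, 0 <= v <= T -> forall eps, 0 < eps -> exists delta, 0 < delta /\
     forall w, 0 <= w <= T -> Rabs (w - v) < delta ->
       E (fun om => Rabs (Y w om - Y v om)) < eps).

Definition bounded_variation (T : R) (R0 : R -> R) : Prop :=
  exists M, forall n (x : nat -> R),
    x O = 0 -> x n = T -> (forall i, (i < n)%nat -> x i < x (S i)) ->
    rsum (fun i => Rabs (R0 (x (S i)) - R0 (x i))) n <= M.

Definition CTB (T : R) (R0 : R -> R) : Prop :=
  R0 0 = 0 /\
  (forall t, 0 <= t <= T -> continuity_pt R0 t) /\
  bounded_variation T R0.

Definition hbar_assumptions {Omega : Type} (H : (Omega -> R) -> Prop)
  (T : R) (hbar : R -> Omega -> R -> R) (Ch cl cu : R) : Prop :=
  (forall eps, 0 < eps -> exists delta, 0 < delta /\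
     forall w t t' y y', 0 <= t <= T -> 0 <= t' <= T ->
       Rabs (t - t') < delta -> Rabs (y - y') < delta ->
       Rabs (hbar t w y - hbar t' w y') < eps) /\
  (forall t w y y', y < y' -> hbar t w y < hbar t w y') /\
  (forall t y, 0 <= t <= T -> H (fun w => hbar t w y)) /\
  (* hbar(t,X) in L^1_G for X in L^1_G (automatic for L^1_G by Lipschitz) *)
  (forall t X, 0 <= t <= T -> H X -> H (fun w => hbar t w (X w))) /\
  (forall t w y, Rabs (hbar t w y) <= Ch * (1 + Rabs y)) /\
  0 < cl /\ cl <= cu /\
  (forall t w y y', cl * Rabs (y - y') <= Rabs (hbar t w y - hbar t w y') /\
                    Rabs (hbar t w y - hbar t w y') <= cu * Rabs (y - y')).

Definition barrier_assumptions (T : R) (l u : R -> R) : Prop :=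
  (exists M, forall t, 0 <= t <= T -> Rabs (l t) <= M /\ Rabs (u t) <= M) /\
  (forall t, 0 <= t <= T -> continuity_pt l t /\ continuity_pt u t) /\
  (exists d, 0 < d /\ forall t, 0 <= t <= T -> d <= u t - l t).

Definition Hbar {Omega : Type} (E : (Omega -> R) -> R)
  (hbar : R -> Omega -> R -> R) (s x : R) (X : Omega -> R) : R :=
  E (fun w => hbar s w (x + X w - E X)).

(* f^{-1}(c): some x with f x = c (the unique one when f is a bijection) *)
Definition inv_at (f : R -> R) (c : R) : R :=
  epsilon (inhabits 0) (fun x => f x = c).

Definition Lop {Omega : Type} (E : (Omega -> R) -> R)
  (hbar : R -> Omega -> R -> R) (l : R -> R) (s : R) (X : Omega -> R) : R :=
  inv_at (fun x => Hbar E hbar s x X) (l s).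

Definition Uop {Omega : Type} (E : (Omega -> R) -> R)
  (hbar : R -> Omega -> R -> R) (u : R -> R) (s : R) (X : Omega -> R) : R :=
  inv_at (fun x => Hbar E hbar s x X) (u s).

Definition BSP {Omega : Type} (E : (Omega -> R) -> R)
  (hbar : R -> Omega -> R -> R) (l u : R -> R) (T : R)
  (Ybar Y : R -> Omega -> R) (R0 : R -> R) : Prop :=
  (* Y_t = Ybar_t + R_T - R_t  (equality in L^1_G, i.e. E|.| = 0) *)
  (forall t, 0 <= t <= T ->
     E (fun w => Rabs (Y t w - (Ybar t w + R0 T - R0 t))) = 0) /\
  (forall t, 0 <= t <= T ->
     l t <= E (fun w => hbar t w (Y t w)) <= u t) /\
  (forall s t, 0 <= s -> s <= t -> t <= T ->
     exists I, is_RS_integral (fun v => E (fun w => hbar v w (Y v w)) - l v)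
                               R0 s t I /\ I <= 0) /\
  (forall s t, 0 <= s -> s <= t -> t <= T ->
     exists I, is_RS_integral (fun v => E (fun w => hbar v w (Y v w)) - u v)
                               R0 s t I /\ I <= 0).

Definition supRbar (t T : R) (f : R -> R) : Rbar :=
  Lub_Rbar (fun x => exists s, t <= s <= T /\ x = f s).

From Stdlib Require Import Reals ClassicalEpsilon FunctionalExtensionality Lra.
From Coquelicot Require Import Coquelicot.
Open Scope R_scope.

(* Since R is deterministic,
   Y_t = Ybar_t + K with K = R_T - R_t.  The map g(x) = E[hbar(t, x)] = Hbar(t, x, 0)
   expands distances by at least c_lo and is c_up-Lipschitz, so it is a bijection
   with g(L_t(0)) = l_t and g(U_t(0)) = u_t; moreover E[hbar(t, Ybar_t + K)] is
   within c_up E|Ybar_t| of g(K).  The constraint l_t <= E[hbar(t, Y_t)] <= u_t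
   therefore puts K within (c_up / c_lo) E|Ybar_t| of [L_t(0), U_t(0)], which is
   sharper than the stated bound. *)

Lemma lipschitz_continuity (g : R -> R) (k : R) :
  (forall x x', Rabs (g x - g x') <= k * Rabs (x - x')) -> continuity g.
Proof.
  intros g_lip x eps eps_pos.
  assert (k1_pos : 0 < Rabs k + 1) by (pose proof (Rabs_pos k); lra).
  exists (eps / (Rabs k + 1)); split.
  - apply Rdiv_lt_0_compat; lra.
  - intros y [_ y_near]; simpl in *; unfold R_dist in *.
    apply Rle_lt_trans with ((Rabs k + 1) * Rabs (y - x)).
    + eapply Rle_trans; [apply g_lip|].
      apply Rmult_le_compat_r; [apply Rabs_pos | pose proof (Rle_abs k); lra].
    + apply (Rmult_lt_compat_l (Rabs k + 1)) in y_near; [|lra].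
      replace ((Rabs k + 1) * (eps / (Rabs k + 1))) with eps in y_near by (field; lra).
      exact y_near.
Qed.

Section Expanding.
Variables (g : R -> R) (c : R).
Hypothesis c_pos : 0 < c.
Hypothesis g_expanding : forall x x', x <= x' -> c * (x' - x) <= g x' - g x.

Lemma expanding_le_of_ge (x y d : R) : 0 <= d -> g x - d <= g y -> x - d / c <= y.
Proof.
  intros d_ge0 gxy.
  assert (d_c : 0 <= d / c) by (apply Rdiv_le_0_compat; lra).
  destruct (Rle_or_lt x y) as [xy | yx]; [lra|].
  pose proof (g_expanding y x (Rlt_le _ _ yx)) as gyx.
  assert (x - y <= d / c) by (apply (Rmult_le_reg_l c); [lra|]; field_simplify; lra).
  lra.
Qed.

Lemma expanding_le_of_le (x y d : R) : 0 <= d -> g y <= g x + d -> y <= x + d / c.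
Proof.
  intros d_ge0 gxy.
  assert (d_c : 0 <= d / c) by (apply Rdiv_le_0_compat; lra).
  destruct (Rle_or_lt y x) as [yx | xy]; [lra|].
  pose proof (g_expanding x y (Rlt_le _ _ xy)) as gxy'.
  assert (y - x <= d / c) by (apply (Rmult_le_reg_l c); [lra|]; field_simplify; lra).
  lra.
Qed.

Lemma expanding_abs_le (a b x d : R) : 0 <= d -> g a - d <= g x <= g b + d ->
  Rabs x <= d / c + Rmax (Rabs a) (Rabs b).
Proof.
  intros d_ge0 [gax gxb].
  pose proof (expanding_le_of_ge a x d d_ge0 gax).
  pose proof (expanding_le_of_le b x d d_ge0 gxb).
  pose proof (Rmax_l (Rabs a) (Rabs b)); pose proof (Rmax_r (Rabs a) (Rabs b)).
  pose proof (Rle_abs a); pose proof (Rle_abs b).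
  pose proof (Rabs_maj2 a); pose proof (Rabs_maj2 b).
  apply Rabs_le; lra.
Qed.

Lemma expanding_lipschitz_surjective (k : R) :
  (forall x x', Rabs (g x - g x') <= k * Rabs (x - x')) -> forall y, exists x, g x = y.
Proof.
  intros g_lip y.
  set (r := Rabs (g 0 - y) / c).
  assert (r_ge0 : 0 <= r) by (apply Rdiv_le_0_compat; [apply Rabs_pos | lra]).
  assert (cr : c * r = Rabs (g 0 - y)) by (unfold r; field; lra).
  assert (g_low : g (- r) <= y).
  { pose proof (g_expanding (- r) 0 ltac:(lra)); pose proof (Rle_abs (g 0 - y)); lra. }
  assert (g_high : y <= g r).
  { pose proof (g_expanding 0 r r_ge0); pose proof (Rabs_maj2 (g 0 - y)); lra. }
  destruct (IVT_gen g (- r) r y (lipschitz_continuity g k g_lip)) as [x [_ gx]].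
  - split; [apply Rle_trans with (g (- r)); [apply Rmin_l | exact g_low]
           | apply Rle_trans with (g r); [exact g_high | apply Rmax_r]].
  - exists x; exact gx.
Qed.

End Expanding.

Lemma Rbar_le_mult_plus (c a m x : R) (A M : Rbar) :
  0 < c -> x <= c * a + m -> Rbar_le a A -> Rbar_le m M ->
  Rbar_le x (Rbar_plus (Rbar_mult c A) M).
Proof.
  intros c_pos x_le aA mM.
  apply Rbar_le_trans with (Rbar_plus (c * a) m); [exact x_le|].
  apply Rbar_plus_le_compat; [|exact mM].
  destruct A as [A' | |]; simpl in aA; try contradiction.
  - simpl; apply Rmult_le_compat_l; lra.
  - rewrite Rbar_mult_comm,
      (is_Rbar_mult_unique _ _ _ (is_Rbar_mult_p_infty_pos (Finite c) c_pos)).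
    exact I.
Qed.

Lemma supRbar_ge (t T : R) (f : R -> R) (s : R) :
  t <= s <= T -> Rbar_le (f s) (supRbar t T f).
Proof.
  intros s_in; apply (proj1 (Lub_Rbar_correct _)); exists s; auto.
Qed.
Section SublinearExpectation.
Variables (Omega : Type) (H : (Omega -> R) -> Prop) (E : (Omega -> R) -> R).
Hypothesis SE : sublinear_expectation H E.

Lemma H_const c : H (fun _ => c).
Proof. apply SE. Qed.

Lemma H_add X Y : H X -> H Y -> H (fun w => X w + Y w).
Proof. apply SE. Qed.

Lemma H_scale a X : H X -> H (fun w => a * X w).
Proof. apply SE. Qed.

Lemma H_abs X : H X -> H (fun w => Rabs (X w)).
Proof. apply SE. Qed.

Lemma E_monotone X Y : H X -> H Y -> (forall w, X w <= Y w) -> E X <= E Y.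
Proof. apply SE. Qed.

Lemma E_const c : E (fun _ => c) = c.
Proof. apply SE. Qed.

Lemma E_subadditive X Y : H X -> H Y -> E (fun w => X w + Y w) <= E X + E Y.
Proof. apply SE. Qed.

Lemma E_pos_homogeneous a X : 0 <= a -> H X -> E (fun w => a * X w) = a * E X.
Proof. apply SE. Qed.

Lemma H_sub X Y : H X -> H Y -> H (fun w => X w - Y w).
Proof.
  intros HX HY.
  replace (fun w => X w - Y w) with (fun w => X w + (-1) * Y w)
    by (apply functional_extensionality; intro; ring).
  apply H_add; [exact HX | apply H_scale; exact HY].
Qed.

Lemma H_abs_sub X Y : H X -> H Y -> H (fun w => Rabs (X w - Y w)).
Proof. intros HX HY; apply H_abs, H_sub; assumption. Qed.

Lemma E_add_const X c : H X -> E (fun w => X w + c) = E X + c.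
Proof.
  intros HX.
  assert (HXc : H (fun w => X w + c)) by (apply H_add; [exact HX | apply H_const]).
  apply Rle_antisym.
  - pose proof (E_subadditive X (fun _ => c) HX (H_const c)) as sub.
    rewrite E_const in sub; exact sub.
  - assert (E X <= E (fun w => (X w + c) + - c)).
    { apply E_monotone; [exact HX | apply H_add; [exact HXc | apply H_const] | intro; lra]. }
    pose proof (E_subadditive (fun w => X w + c) (fun _ => - c) HXc (H_const _)).
    rewrite E_const in *; lra.
Qed.

Lemma E_le_add_abs_sub X Y : H X -> H Y -> E X <= E Y + E (fun w => Rabs (X w - Y w)).
Proof.
  intros HX HY.
  eapply Rle_trans; [| apply E_subadditive; [exact HY | apply H_abs_sub; assumption]].
  apply E_monotone; [exact HX | apply H_add; [exact HY | apply H_abs_sub; assumption] |].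
  intro w; pose proof (Rle_abs (X w - Y w)); lra.
Qed.

Lemma Rabs_E_sub_le X Y : H X -> H Y -> Rabs (E X - E Y) <= E (fun w => Rabs (X w - Y w)).
Proof.
  intros HX HY.
  pose proof (E_le_add_abs_sub X Y HX HY).
  pose proof (E_le_add_abs_sub Y X HY HX).
  replace (fun w => Rabs (Y w - X w)) with (fun w => Rabs (X w - Y w)) in *
    by (apply functional_extensionality; intro; apply Rabs_minus_sym).
  apply Rabs_le; lra.
Qed.

Lemma E_le_scale X Z c : H X -> H Z -> 0 <= c -> (forall w, X w <= c * Z w) ->
  E X <= c * E Z.
Proof.
  intros HX HZ c_ge0 XZ.
  rewrite <- E_pos_homogeneous by assumption.
  apply E_monotone; [exact HX | apply H_scale; exact HZ | exact XZ].
Qed.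

Lemma E_abs_ge0 X : H X -> 0 <= E (fun w => Rabs (X w)).
Proof.
  intros HX; rewrite <- (E_const 0).
  apply E_monotone; [apply H_const | apply H_abs; exact HX | intro; apply Rabs_pos].
Qed.

Section HbarAtTime.
Variables (T : R) (hbar : R -> Omega -> R -> R) (Ch cl cu : R).
Hypothesis HA : hbar_assumptions H T hbar Ch cl cu.
Variable t : R.
Hypothesis t_in : 0 <= t <= T.

Lemma cl_pos : 0 < cl.
Proof. apply HA. Qed.

Lemma cu_ge0 : 0 <= cu.
Proof. destruct HA as (_ & _ & _ & _ & _ & cl_gt0 & cl_le_cu & _); lra. Qed.

Lemma H_hbar_const x : H (fun w => hbar t w x).
Proof. destruct HA as (_ & _ & H_hbar_y & _); exact (H_hbar_y t x t_in). Qed.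

Lemma H_hbar X : H X -> H (fun w => hbar t w (X w)).
Proof. destruct HA as (_ & _ & _ & H_hbar_X & _); exact (H_hbar_X t X t_in). Qed.

Lemma hbar_lipschitz w x x' : Rabs (hbar t w x - hbar t w x') <= cu * Rabs (x - x').
Proof. apply HA. Qed.

Lemma hbar_expanding w x x' : x <= x' -> cl * (x' - x) <= hbar t w x' - hbar t w x.
Proof.
  intros [lt | ->]; [| lra].
  destruct HA as (_ & hbar_incr & _ & _ & _ & _ & _ & hbar_bilip).
  pose proof (hbar_incr t w x x' lt) as incr.
  destruct (hbar_bilip t w x' x) as [lower _].
  rewrite !Rabs_right in lower by lra; exact lower.
Qed.

Lemma Hbar_zero x : Hbar E hbar t x (fun _ => 0) = E (fun w => hbar t w x).
Proof.
  unfold Hbar; rewrite E_const.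
  f_equal; apply functional_extensionality; intro w; f_equal; ring.
Qed.

Lemma Hbar_zero_expanding x x' : x <= x' ->
  cl * (x' - x) <= Hbar E hbar t x' (fun _ => 0) - Hbar E hbar t x (fun _ => 0).
Proof.
  intros xx'; rewrite !Hbar_zero.
  assert (E (fun w => hbar t w x + cl * (x' - x)) <= E (fun w => hbar t w x')).
  { apply E_monotone; [apply H_add; [apply H_hbar_const | apply H_const] | apply H_hbar_const |].
    intro w; pose proof (hbar_expanding w x x' xx'); lra. }
  pose proof (E_add_const _ (cl * (x' - x)) (H_hbar_const x)); lra.
Qed.

Lemma Hbar_zero_lipschitz x x' :
  Rabs (Hbar E hbar t x (fun _ => 0) - Hbar E hbar t x' (fun _ => 0)) <= cu * Rabs (x - x').
Proof.
  rewrite !Hbar_zero.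
  eapply Rle_trans; [apply Rabs_E_sub_le; apply H_hbar_const|].
  rewrite <- (E_const (cu * Rabs (x - x'))).
  apply E_monotone; [apply H_abs_sub; apply H_hbar_const | apply H_const |].
  intro w; apply hbar_lipschitz.
Qed.

Lemma Hbar_zero_inv_at c :
  Hbar E hbar t (inv_at (fun x => Hbar E hbar t x (fun _ => 0)) c) (fun _ => 0) = c.
Proof.
  unfold inv_at; apply (epsilon_spec (inhabits 0) (fun x => Hbar E hbar t x (fun _ => 0) = c)).
  apply (expanding_lipschitz_surjective _ cl cl_pos Hbar_zero_expanding cu Hbar_zero_lipschitz).
Qed.

Lemma Rabs_E_hbar_shift_le X K : H X ->
  Rabs (E (fun w => hbar t w (X w + K)) - Hbar E hbar t K (fun _ => 0))
    <= cu * E (fun w => Rabs (X w)).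
Proof.
  intros HX; rewrite Hbar_zero.
  assert (HXK : H (fun w => X w + K)) by (apply H_add; [exact HX | apply H_const]).
  eapply Rle_trans; [apply Rabs_E_sub_le; [apply H_hbar; exact HXK | apply H_hbar_const]|].
  apply E_le_scale; [apply H_abs_sub; [apply H_hbar; exact HXK | apply H_hbar_const]
                    | apply H_abs; exact HX | exact cu_ge0 |].
  intro w; eapply Rle_trans; [apply hbar_lipschitz | right; do 2 f_equal; ring].
Qed.

Lemma E_hbar_congr X Y : H X -> H Y -> E (fun w => Rabs (X w - Y w)) = 0 ->
  E (fun w => hbar t w (X w)) = E (fun w => hbar t w (Y w)).
Proof.
  intros HX HY XY.
  assert (Rabs (E (fun w => hbar t w (X w)) - E (fun w => hbar t w (Y w))) <= 0).
  { eapply Rle_trans; [apply Rabs_E_sub_le; apply H_hbar; assumption|].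
    rewrite <- (Rmult_0_r cu), <- XY.
    apply E_le_scale; [apply H_abs_sub; apply H_hbar; assumption
                      | apply H_abs_sub; assumption | exact cu_ge0 | intro; apply hbar_lipschitz]. }
  pose proof (Rabs_pos (E (fun w => hbar t w (X w)) - E (fun w => hbar t w (Y w)))).
  apply Rminus_diag_uniq, Rabs_eq_0; lra.
Qed.

Lemma abs_shift_le_of_constraint (l u : R -> R) (X Y : Omega -> R) (K : R) :
  H X -> H Y -> E (fun w => Rabs (Y w - (X w + K))) = 0 ->
  l t <= E (fun w => hbar t w (Y w)) <= u t ->
  Rabs K <= cu * E (fun w => Rabs (X w)) / cl +
    Rmax (Rabs (Lop E hbar l t (fun _ => 0))) (Rabs (Uop E hbar u t (fun _ => 0))).
Proof.
  intros HX HY YXK lu.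
  assert (HXK : H (fun w => X w + K)) by (apply H_add; [exact HX | apply H_const]).
  rewrite (E_hbar_congr Y (fun w => X w + K) HY HXK YXK) in lu.
  pose proof (Rabs_E_hbar_shift_le X K HX) as near.
  apply (expanding_abs_le _ cl cl_pos Hbar_zero_expanding).
  - apply Rmult_le_pos; [exact cu_ge0 | apply E_abs_ge0; exact HX].
  - unfold Lop, Uop; rewrite !Hbar_zero_inv_at.
    apply Rabs_le_between in near; lra.
Qed.

End HbarAtTime.
End SublinearExpectation.

Theorem proposition3p11 (Omega : Type)
  (H : (Omega -> R) -> Prop) (E : (Omega -> R) -> R)
  (T : R) (l u : R -> R) (hbar : R -> Omega -> R -> R) (Ch cl cu : R)
  (Ybar Y : R -> Omega -> R) (R0 : R -> R) :
  0 < T ->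
  sublinear_expectation H E ->
  barrier_assumptions T l u ->
  hbar_assumptions H T hbar Ch cl cu ->
  C1G H E T Ybar ->
  l T <= E (fun w => hbar T w (Ybar T w)) <= u T ->
  C1G H E T Y -> CTB T R0 ->
  BSP E hbar l u T Ybar Y R0 ->
  forall t, 0 <= t <= T ->
    Rbar_le (Rabs (R0 T - R0 t))
      (Rbar_plus
         (Rbar_mult (1 + 2 * cu / cl)
            (supRbar t T (fun s => E (fun w => Rabs (Ybar s w)))))
         (supRbar t T (fun s => Rmax (Rabs (Lop E hbar l s (fun _ => 0)))
                                     (Rabs (Uop E hbar u s (fun _ => 0)))))).
Proof.
  intros _ SE _ HA [H_Ybar _] _ [H_Y _] _ [Y_eq [Y_constraint _]] t t_in.
  set (a := E (fun w => Rabs (Ybar t w))).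
  assert (a_ge0 : 0 <= a) by (apply (E_abs_ge0 _ _ _ SE), H_Ybar, t_in).
  assert (cl_gt0 : 0 < cl) by (eapply cl_pos; exact HA).
  assert (cu_cl : 0 <= cu / cl) by (apply Rdiv_le_0_compat; [eapply cu_ge0; exact HA | lra]).
  assert (Y_shift : E (fun w => Rabs (Y t w - (Ybar t w + (R0 T - R0 t)))) = 0).
  { rewrite <- (Y_eq t t_in); f_equal; apply functional_extensionality; intro w; f_equal; ring. }
  pose proof (abs_shift_le_of_constraint _ _ _ SE _ _ _ _ _ HA t t_in l u (Ybar t) (Y t) _
                (H_Ybar t t_in) (H_Y t t_in) Y_shift (Y_constraint t t_in)) as bound.
  fold a in bound.
  apply (Rbar_le_mult_plus (1 + 2 * cu / cl) a
           (Rmax (Rabs (Lop E hbar l t (fun _ => 0))) (Rabs (Uop E hbar u t (fun _ => 0))))).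
  - replace (2 * cu / cl) with (2 * (cu / cl)) by (unfold Rdiv; ring); lra.
  - replace (cu * a / cl) with (cu / cl * a) in bound by (field; lra).
    replace (2 * cu / cl) with (2 * (cu / cl)) by (unfold Rdiv; ring).
    pose proof (Rmult_le_pos _ _ cu_cl a_ge0); lra.
  - apply (supRbar_ge t T (fun s => E (fun w => Rabs (Ybar s w)))); lra.
  - apply (supRbar_ge t T (fun s => Rmax (Rabs (Lop E hbar l s (fun _ => 0)))
                                         (Rabs (Uop E hbar u s (fun _ => 0))))); lra.
Qed.
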